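(* Let $q\ge 2$ be a prime power. For all $x,y\in\mathbb{F}_q$, any two distinct vertices of $\{(x,y,j)_0: j\in\mathbb{F}_q\}$ are at distance at least $6$ in $B_q$.
   Context: $\mathbb{F}_q$ is the field with $q$ elements. $B_q$ is the bipartite graph with parts $\{(x,y,z)_0: x,y,z\in\mathbb{F}_q\}$ and $\{(a,b,c)_1: a,b,c\in\mathbb{F}_q\}$, in which $(a,b,c)_1$ is adjacent exactly to $(j,\,aj+b,\,a^2j+2ab+c)_0$, $j\in\mathbb{F}_q$. *)

From HB Require Import structures.
From mathcomp Require Import all_boot all_order all_algebra all_field.
Set Implicit Arguments. Unset Strict Implicit. Unset Printing Implicit Defensive.
Import GRing.Theory.
Local Open Scope ring_scope.

(* Vertices of B_q over a finite field F (|F| = q):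
   inl (x,y,z) = point (x,y,z)_0 ; inr (a,b,c) = line (a,b,c)_1. *)
Definition vertex (F : finFieldType) : finType :=
  ((F * F * F) + (F * F * F))%type.

Definition incident (F : finFieldType) (l p : F * F * F) : bool :=
  let: (a, b, c) := l in
  let: (x, y, z) := p in
  (y == a * x + b) && (z == a ^+ 2 * x + 2%:R * a * b + c).

Definition Badj (F : finFieldType) : rel (vertex F) :=
  fun u v =>
    match u, v with
    | inl p, inr l => incident l p
    | inr l, inl p => incident l p
    | _, _ => false
    end.

(* dist(u,v) >= n in B_q: every walk from u to v has length >= n.
   A walk u = v_0, v_1, ..., v_k = v is given by s = [:: v_1; ...; v_k]. *)
Definition dist_ge (F : finFieldType) (n : nat) (u v : vertex F) : Prop :=
  forall s : seq (vertex F), path (@Badj F) u s -> last u s = v -> (n <= size s)%N.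

From HB Require Import structures.
From mathcomp Require Import all_boot all_order all_algebra all_field.
From mathcomp Require Import ring.
Set Implicit Arguments. Unset Strict Implicit. Unset Printing Implicit Defensive.
Import GRing.Theory.
Local Open Scope ring_scope.

(* Two points (x,y,j1)_0 and (x,y,j2)_0 of one fibre, j1 <> j2, are at
   distance at least 6 in B_q.
   - Along a line (a,b,c)_1 the displacement between two of its points is
     (d, a d, a^2 d): the line is a "parabola" of slope a.
   - Hence a line meets a fibre {(x,y,_)_0} at most once (no walk of
     length 2), and two lines through the fibre meeting in a common point
     force equal third coordinates (no walk of length 4): if the slopes
     are a, a' and the common point has first coordinate u, then
     (a - a')(u - x) = 0 while j2 - j1 = (a^2 - a'^2)(u - x).
   - B_q is bipartite, so walks between points have even length.
   The theorem follows by excluding walks of length 0, 2 and 4. *)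

Lemma incident_displacement (F : finFieldType) (a b c x y z u v w : F) :
  incident (a, b, c) (x, y, z) -> incident (a, b, c) (u, v, w) ->
  v - y = a * (u - x) /\ w - z = a ^+ 2 * (u - x).
Proof.
move=> /andP [/eqP -> /eqP ->] /andP [/eqP -> /eqP ->].
by split; ring.
Qed.

Lemma line_meets_fibre_once (F : finFieldType) (l : F * F * F) (x y j1 j2 : F) :
  incident l (x, y, j1) -> incident l (x, y, j2) -> j1 = j2.
Proof.
case: l => [[a b] c] h1 h2.
have [_] := incident_displacement h1 h2.
by rewrite subrr mulr0 => /subr0_eq.
Qed.

Lemma fibre_lines_meet (F : finFieldType) (l1 l2 p : F * F * F) (x y j1 j2 : F) :
  incident l1 (x, y, j1) -> incident l1 p -> incident l2 p ->
  incident l2 (x, y, j2) -> j1 = j2.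
Proof.
case: l1 l2 p => [[a b] c] [[a' b'] c'] [[u v] w] h1 hp1 hp2 h2.
have [Ey1 Ez1] := incident_displacement h1 hp1.
have [Ey2 Ez2] := incident_displacement h2 hp2.
have slopes : (a - a') * (u - x) = 0.
  by rewrite mulrBl -Ey1 -Ey2 subrr.
have : j2 - j1 = (a + a') * ((a - a') * (u - x)).
  have -> : j2 - j1 = (w - j1) - (w - j2) by ring.
  by rewrite Ez1 Ez2; ring.
by rewrite slopes mulr0 => /subr0_eq.
Qed.

Definition side (F : finFieldType) (v : vertex F) : bool :=
  if v is inr _ then true else false.

Lemma Badj_side (F : finFieldType) (u v : vertex F) :
  Badj u v -> side v = ~~ side u.
Proof. by case: u v => [?|?] [?|?]. Qed.

Lemma walk_side (F : finFieldType) (u : vertex F) (s : seq (vertex F)) :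
  path (@Badj F) u s -> side (last u s) = side u (+) odd (size s).
Proof.
elim: s u => [|v s IHs] u /=; first by rewrite addbF.
move=> /andP [huv /IHs ->]; rewrite (Badj_side huv).
by rewrite addNb addbN.
Qed.

Theorem claim2 (F : finFieldType) (x y j1 j2 : F) :
  j1 != j2 ->
  dist_ge 6 (inl (x, y, j1) : vertex F) (inl (x, y, j2)).
Proof.
move=> /eqP hj s walk ends; rewrite leqNgt; apply/negP => short.
have even_s : ~~ odd (size s) by have := walk_side walk; rewrite ends /= => <-.
case: s walk ends short even_s => [|v1 [|v2 [|v3 [|v4 [|v5 [|v6 s]]]]]] //=.
- by move=> _ [/hj].
- case: v1 => [?|l] //= /and3P [h1 h2 _] E _ _; subst v2.
  exact: hj (line_meets_fibre_once h1 h2).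
- case: v1 v2 v3 => [?|l1] [p|?] [?|l2] //=; rewrite ?andbF //.
  move=> /and5P [h1 h2 h3 h4 _] E _ _; subst v4.
  exact: hj (fibre_lines_meet h1 h2 h3 h4).
Qed.
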